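(* If the supply graph $G$ is a cycle and the demand digraph $H=(T,L)$ has at most two OD-pairs ($|L|\le 2$), then $(G,H)$ has the uniqueness property.
   Context: A supply graph is a finite undirected graph $G=(V,E)$ with directed version obtained by replacing each edge by two opposite arcs; a demand digraph is a simple digraph $H=(T,L)$ with $T\subseteq V$, whose arcs are OD-pairs; routes for $(o,d)\in L$ are directed $(o,d)$-paths in the directed version of $G$. Users (a bounded interval with Lebesgue measure, partitioned measurably by OD-pair) choose routes; flows are measures of users using each arc; each user has nonnegative continuous strictly increasing arc cost functions (measurable in the user); an equilibrium is a profile where every user takes a minimal-cost route. $(G,H)$ has the uniqueness property if for every measurable partition of users into OD-pairs and every such cost assignment, the flow on each arc is the same in all equilibria. *)

From HB Require Import structures.
From mathcomp Require Import all_boot all_order all_algebra.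
From mathcomp Require Import all_classical all_reals all_analysis.
Set Implicit Arguments. Unset Strict Implicit. Unset Printing Implicit Defensive.
Import Order.TTheory GRing.Theory Num.Theory numFieldNormedType.Exports.
Local Open Scope classical_set_scope.
Local Open Scope ring_scope.

(* A (simple) undirected supply graph is a symmetric irreflexive relation
   [adj] on a finite vertex type [V]; its directed version has an arc (u,v)
   for every ordered pair of adjacent vertices. *)

Definition route_arcs (V : eqType) (p : seq V) : seq (V * V) :=
  zip p (behead p).

Definition is_route (V : finType) (adj : rel V) (o d : V) (p : seq V) : Prop :=
  exists q, p = o :: q /\ path adj o q /\ last o q = d /\ uniq (o :: q).

Definition flow (R : realType) (V : finType) (I : set R) (sigma : R -> seq V)
  (e : V * V) : R :=
  fine (lebesgue_measure (I `&` [set x | e \in route_arcs (sigma x)])).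

Definition route_cost (R : realType) (V : finType) (c : R -> V * V -> R -> R)
  (x : R) (f : V * V -> R) (p : seq V) : R :=
  \sum_(e <- route_arcs p) c x e (f e).

Definition admissible_costs (R : realType) (V : finType) (I : set R)
  (c : R -> V * V -> R -> R) : Prop :=
  (forall x e, I x ->
     {within (`[0, +oo[%classic : set R), continuous (c x e)} /\
     (forall t, 0 <= t -> 0 <= c x e t) /\
     (forall s t, 0 <= s -> s < t -> c x e s < c x e t)) /\
  (forall e t, measurable_fun I (fun x => c x e t)).

Definition equilibrium (R : realType) (V : finType) (adj : rel V) (I : set R)
  (od : R -> V * V) (c : R -> V * V -> R -> R) (sigma : R -> seq V) : Prop :=
  (forall p, measurable (I `&` sigma @^-1` [set p])) /\
  (forall x, I x -> is_route adj (od x).1 (od x).2 (sigma x)) /\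
  (forall x q, I x -> is_route adj (od x).1 (od x).2 q ->
     route_cost c x (flow I sigma) (sigma x) <= route_cost c x (flow I sigma) q).

(* The uniqueness property of (G,H), with G given by [adj] and the arcs of
   the demand digraph H by [L]. Users form a bounded interval [a,b]. *)
Definition uniqueness_property (V : finType) (adj : rel V)
  (L : {set V * V}) : Prop :=
  forall (R : realType) (a b : R) (od : R -> V * V) (c : R -> V * V -> R -> R),
    let I : set R := `[a, b]%classic in
    (forall x, I x -> od x \in L) ->
    (forall l, measurable (I `&` od @^-1` [set l])) ->
    admissible_costs I c ->
    forall sigma1 sigma2,
      equilibrium adj I od c sigma1 -> equilibrium adj I od c sigma2 ->
      forall e, flow I sigma1 e = flow I sigma2 e.

Definition cycle_adj (n : nat) : rel 'I_n :=
  fun i j => (val j == (val i).+1 %% n)%N || (val i == (val j).+1 %% n)%N.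

(* On a cycle an OD-pair (o,d) has exactly two routes, clockwise and counterclockwise,
   and no arc is used in both directions. For two equilibria the flow difference on an
   arc e is sum_k sg_k(e) D_k, where D_k is the net mass of users of pair k moving from
   the clockwise to the counterclockwise route and sg_k(e) is 1, -1 or 0 according as e
   lies on the clockwise, counterclockwise or neither route of pair k. Take k with |D_k|
   maximal and suppose D_k <> 0. Then some user of pair k switched routes; the flow did
   not increase on the route it left nor decrease on the route it took, so the
   equilibrium inequalities and strictly increasing costs force the flow to be unchanged
   on both routes. Hence on every arc of both routes of pair k the other pair's term
   cancels D_k, so each route of pair k lies inside the same-direction route of the
   other pair, and that forces the two pairs to coincide. *)

From HB Require Import structures.
From mathcomp Require Import all_boot all_order all_algebra.
From mathcomp Require Import all_classical all_reals all_analysis.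
From mathcomp Require Import zify ring lra.
Set Implicit Arguments. Unset Strict Implicit. Unset Printing Implicit Defensive.
Import Order.TTheory GRing.Theory Num.Theory numFieldNormedType.Exports.
Local Open Scope ring_scope.

Lemma ler_sum_eq (R : numDomainType) (T : eqType) (s : seq T) (F G : T -> R) :
  {in s, forall e, F e <= G e} -> \sum_(e <- s) F e = \sum_(e <- s) G e ->
  forall e, e \in s -> F e = G e.
Proof.
move=> FleG eqFG.
have : \sum_(e <- s | e \in s) (G e - F e) == 0 by rewrite -big_seq sumrB eqFG subrr.
rewrite psumr_eq0 => [/allP allz e es|e /FleG]; last by rewrite subr_ge0.
by apply/eqP; rewrite eq_sym -subr_eq0; move/implyP: (allz e es) => /(_ es).
Qed.

Lemma route_costs_agree (R : realType) (V : finType) (c : R -> V * V -> R -> R)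
    (x : R) (f1 f2 : V * V -> R) (P Q : seq V) :
  (forall e s t, 0 <= s -> s < t -> c x e s < c x e t) ->
  (forall e, 0 <= f1 e) -> (forall e, 0 <= f2 e) ->
  route_cost c x f1 P <= route_cost c x f1 Q ->
  route_cost c x f2 Q <= route_cost c x f2 P ->
  {in route_arcs P, forall e, f2 e <= f1 e} ->
  {in route_arcs Q, forall e, f1 e <= f2 e} ->
  {in route_arcs P, f1 =1 f2} /\ {in route_arcs Q, f1 =1 f2}.
Proof.
move=> cx_incr f1_ge0 f2_ge0 P_best1 Q_best2 leP leQ.
have cx_mono e s t : 0 <= s -> s <= t -> c x e s <= c x e t.
  by move=> s_ge0; rewrite le_eqVlt => /predU1P[->//|/(cx_incr e _ _ s_ge0)/ltW].
have cx_inj e s t : 0 <= s -> 0 <= t -> c x e s = c x e t -> s = t.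
  move=> s_ge0 t_ge0 cst; case: (ltgtP s t) => // [/(cx_incr e _ _ s_ge0)|/(cx_incr e _ _ t_ge0)];
  by rewrite cst ltxx.
have costP : route_cost c x f2 P <= route_cost c x f1 P.
  by rewrite /route_cost !big_seq; apply: ler_sum => e /leP; apply: cx_mono.
have costQ : route_cost c x f1 Q <= route_cost c x f2 Q.
  by rewrite /route_cost !big_seq; apply: ler_sum => e /leQ; apply: cx_mono.
have sameP : \sum_(e <- route_arcs P) c x e (f2 e) = \sum_(e <- route_arcs P) c x e (f1 e).
  by move: P_best1 Q_best2 costP costQ; rewrite /route_cost; lra.
have sameQ : \sum_(e <- route_arcs Q) c x e (f1 e) = \sum_(e <- route_arcs Q) c x e (f2 e).
  by move: P_best1 Q_best2 costP costQ; rewrite /route_cost; lra.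
split=> e e_arc; apply: (cx_inj e _ _ (f1_ge0 e) (f2_ge0 e)).
- by apply/esym/(ler_sum_eq _ sameP e_arc) => i /leP; apply: cx_mono.
- by apply: (ler_sum_eq _ sameQ e_arc) => i /leQ; apply: cx_mono.
Qed.

Lemma flow_ge0 (R : realType) (V : finType) (I : set R) (s : R -> seq V) e :
  0 <= flow I s e.
Proof. exact/fine_ge0/measure_ge0. Qed.

Lemma route_arcs_map_iota (T : eqType) (f : nat -> T) k m :
  route_arcs [seq f i | i <- iota k m.+1] = [seq (f i, f i.+1) | i <- iota k m].
Proof. by elim: m k => //= m IHm k; rewrite -IHm. Qed.

Local Open Scope classical_set_scope.

Section UserMass.
Variables (R : realType) (a b : R) (V : finType) (od : R -> V * V) (s1 s2 : R -> seq V).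
Let I : set R := `[a, b]%classic.
Hypothesis od_meas : forall l, measurable (I `&` od @^-1` [set l]).
Hypothesis s1_meas : forall p, measurable (I `&` s1 @^-1` [set p]).
Hypothesis s2_meas : forall p, measurable (I `&` s2 @^-1` [set p]).

Definition user_mass (Q : V * V -> seq V -> seq V -> Prop) : R :=
  fine (lebesgue_measure (I `&` [set x | Q (od x) (s1 x) (s2 x)])).

Local Notation M := user_mass.

(* The triple (od x, s1 x, s2 x) ranges over a countable type, so the set of
   users satisfying Q is a countable union of measurable sets. *)
Lemma measurable_users Q : measurable (I `&` [set x | Q (od x) (s1 x) (s2 x)]).
Proof.
pose F k := if @unpickle ((V * V) * seq V * seq V)%type k is Some t then
    if `[< Q t.1.1 t.1.2 t.2 >] then
      (I `&` od @^-1` [set t.1.1]) `&` (I `&` s1 @^-1` [set t.1.2])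
        `&` (I `&` s2 @^-1` [set t.2])
    else set0
  else set0.
have -> : I `&` [set x | Q (od x) (s1 x) (s2 x)] = \bigcup_k F k.
  apply/seteqP; split => x.
  - move=> [Ix Qx]; exists (pickle (od x, s1 x, s2 x)) => //.
    by rewrite /F pickleK /=; case: asboolP.
  - move=> [k _]; rewrite /F; case: unpickle => [[[l p] q]|] //=.
    by case: asboolP => // Qlpq [[[Ix odx] [_ s1x]] [_ s2x]]; split; rewrite /= ?odx ?s1x ?s2x.
apply: bigcupT_measurable => k; rewrite /F.
case: unpickle => [t|]; last exact: measurable0.
case: asboolP => _; last exact: measurable0.
by apply: measurableI; [apply: measurableI|].
Qed.

Lemma users_fin_num Q :
  lebesgue_measure (I `&` [set x | Q (od x) (s1 x) (s2 x)]) \is a fin_num.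
Proof.
rewrite ge0_fin_numE ?measure_ge0 //.
apply: (@le_lt_trans _ _ (lebesgue_measure I)).
  by apply: le_measure; rewrite ?inE; [exact: measurable_users|exact: measurable_itv|].
by rewrite /I lebesgue_measure_itv /=; case: ifP => _; rewrite -?EFinD ltry.
Qed.

Lemma user_mass_ge0 Q : 0 <= M Q.
Proof. exact/fine_ge0/measure_ge0. Qed.

Lemma eq_user_mass Q Q' :
  (forall x, I x -> Q (od x) (s1 x) (s2 x) <-> Q' (od x) (s1 x) (s2 x)) -> M Q = M Q'.
Proof.
move=> QQ'; rewrite /M; congr (fine (lebesgue_measure _)).
by apply/seteqP; split => x [Ix Qx]; split => //; apply/(QQ' x Ix).
Qed.

Lemma user_mass0 Q : (forall x, I x -> ~ Q (od x) (s1 x) (s2 x)) -> M Q = 0.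
Proof.
move=> noQ; rewrite /M (_ : _ `&` _ = set0) ?measure0 //.
by apply/seteqP; split => x // [Ix]; apply: noQ.
Qed.

Lemma user_mass_gt0 Q : 0 < M Q -> exists2 x, I x & Q (od x) (s1 x) (s2 x).
Proof.
move=> MQ_gt0; apply: contrapT => noQ.
by move: MQ_gt0; rewrite user_mass0 ?ltxx // => x Ix Qx; apply: noQ; exists x.
Qed.

Lemma user_mass_splitb Q (B : V * V -> seq V -> seq V -> bool) :
  M Q = \sum_(k : bool) M (fun l p q => Q l p q /\ B l p q = k).
Proof.
pose QB k l p q := Q l p q /\ B l p q = k.
rewrite big_bool /= /M -fineD; try exact: (users_fin_num (QB _)).
have := measureU lebesgue_measure (measurable_users (QB true)) (measurable_users (QB false)).
rewrite /QB /= => <-; last first.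
  by apply/seteqP; split => x // [[_ [_ Bt]] [_ [_]]]; rewrite Bt.
congr (fine (lebesgue_measure _)); apply/seteqP; split => x /=.
  by move=> [Ix Qx]; case: (B _ _ _) Qx; [left|right].
by move=> [] [Ix []].
Qed.

Variables (Rp Rm : V * V -> seq V) (l1 l2 : V * V).
Hypothesis users_on_routes : forall x, I x ->
  [/\ od x = l1 \/ od x = l2, s1 x = Rp (od x) \/ s1 x = Rm (od x)
    & s2 x = Rp (od x) \/ s2 x = Rm (od x)].

Definition lsel (k : bool) := if k then l1 else l2.
Definition Rsel (u : bool) l := if u then Rp l else Rm l.

Definition user_class (k u v : bool) : V * V -> seq V -> seq V -> Prop :=
  fun l p q => [/\ (l == l1) = k, (p == Rp l) = u & (q == Rp l) = v].

Lemma user_classP x k u v : I x -> user_class k u v (od x) (s1 x) (s2 x) ->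
  [/\ od x = lsel k, s1 x = Rsel u (lsel k) & s2 x = Rsel v (lsel k)].
Proof.
move=> Ix [odk s1u s2v]; case: (users_on_routes Ix) => odl s1R s2R.
have odx : od x = lsel k.
  by case: k odk odl => /= [/eqP|odk] // [odl1|//]; rewrite odl1 eqxx in odk.
split=> //; rewrite -odx.
- by case: u s1u s1R => /= [/eqP|s1u] // [s1P|//]; rewrite s1P eqxx in s1u.
- by case: v s2v s2R => /= [/eqP|s2v] // [s2P|//]; rewrite s2P eqxx in s2v.
Qed.

Lemma user_mass_classes Q : M Q = \sum_(k : bool) \sum_(u : bool) \sum_(v : bool)
  M (fun l p q => Q l p q /\ user_class k u v l p q).
Proof.
rewrite (user_mass_splitb Q (fun l p q => l == l1)); apply: eq_bigr => k _.
rewrite (user_mass_splitb _ (fun l p q => p == Rp l)); apply: eq_bigr => u _.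
rewrite (user_mass_splitb _ (fun l p q => q == Rp l)); apply: eq_bigr => v _.
by apply: eq_user_mass => x _; split => [[[[]]]|[? []]].
Qed.

Lemma user_mass_class_arc1 e k u v :
  M (fun l p q => e \in route_arcs p /\ user_class k u v l p q) =
  (e \in route_arcs (Rsel u (lsel k)))%:R * M (user_class k u v).
Proof.
case eA: (e \in route_arcs (Rsel u (lsel k))).
- rewrite mul1r; apply: eq_user_mass => x Ix; split=> [[]//|cx]; split=> //.
  by case: (user_classP Ix cx) => _ ->.
- rewrite mul0r; apply: user_mass0 => x Ix [eA' cx].
  by case: (user_classP Ix cx) => _ s1x _; rewrite s1x eA in eA'.
Qed.

Lemma user_mass_class_arc2 e k u v :
  M (fun l p q => e \in route_arcs q /\ user_class k u v l p q) =
  (e \in route_arcs (Rsel v (lsel k)))%:R * M (user_class k u v).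
Proof.
case eA: (e \in route_arcs (Rsel v (lsel k))).
- rewrite mul1r; apply: eq_user_mass => x Ix; split=> [[]//|cx]; split=> //.
  by case: (user_classP Ix cx) => _ _ ->.
- rewrite mul0r; apply: user_mass0 => x Ix [eA' cx].
  by case: (user_classP Ix cx) => _ _ s2x; rewrite s2x eA in eA'.
Qed.

Definition arc_sign e k : R :=
  (e \in route_arcs (Rp (lsel k)))%:R - (e \in route_arcs (Rm (lsel k)))%:R.

Definition net_switch k := M (user_class k true false) - M (user_class k false true).

Lemma flow_diffE e : flow I s1 e - flow I s2 e =
  arc_sign e true * net_switch true + arc_sign e false * net_switch false.
Proof.
rewrite -[flow I s1 e]/(M (fun l p q => e \in route_arcs p)).
rewrite -[flow I s2 e]/(M (fun l p q => e \in route_arcs q)).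
rewrite !user_mass_classes !big_bool !user_mass_class_arc1 !user_mass_class_arc2.
by rewrite /arc_sign /net_switch /=; ring.
Qed.

Lemma switching_user k : net_switch k != 0 ->
  exists u, (if u then 1 else -1) * net_switch k = `|net_switch k| /\
    exists2 x, I x & user_class k u (~~ u) (od x) (s1 x) (s2 x).
Proof.
have := user_mass_ge0 (user_class k true false).
have := user_mass_ge0 (user_class k false true).
case: (ltgtP (net_switch k) 0) => // [D_lt0|D_gt0] m1 m2 _.
- rewrite /net_switch in D_lt0 *; exists false; split; first by rewrite ltr0_norm //=; lra.
  by apply: user_mass_gt0; lra.
- rewrite /net_switch in D_gt0 *; exists true; split; first by rewrite gtr0_norm //=; lra.
  by apply: user_mass_gt0; lra.
Qed.

End UserMass.

Section TwoRouteNetworks.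
Variables (V : finType) (adj : rel V) (Rp Rm : V * V -> seq V).
Hypothesis route_cases : forall l p, is_route adj l.1 l.2 p -> p = Rp l \/ p = Rm l.
Hypothesis Rp_Rm_arcs_disjoint :
  forall l l' e, e \in route_arcs (Rp l) -> e \in route_arcs (Rm l') = false.
Hypothesis od_of_route_arcs : forall l l', l.1 != l.2 ->
  {subset route_arcs (Rp l) <= route_arcs (Rp l')} ->
  {subset route_arcs (Rm l) <= route_arcs (Rm l')} -> l = l'.

Lemma arc_sign_Rsel (R : realType) (l1 l2 : V * V) u k e :
  e \in route_arcs (Rsel Rp Rm u (lsel l1 l2 k)) ->
  arc_sign R Rp Rm l1 l2 e k = if u then 1 else -1.
Proof.
rewrite /arc_sign; case: u => /= e_arc; first by rewrite e_arc (Rp_Rm_arcs_disjoint _ e_arc) subr0.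
case eP: (e \in route_arcs _); first by rewrite (Rp_Rm_arcs_disjoint _ eP) in e_arc.
by rewrite e_arc sub0r.
Qed.

Lemma arc_sign_neq0_mem (R : realType) (l1 l2 : V * V) u k k' e :
  e \in route_arcs (Rsel Rp Rm u (lsel l1 l2 k)) ->
  arc_sign R Rp Rm l1 l2 e k' != 0 -> e \in route_arcs (Rsel Rp Rm u (lsel l1 l2 k')).
Proof.
rewrite /arc_sign; case: u => /= e_arc.
- by rewrite (Rp_Rm_arcs_disjoint _ e_arc) subr0; apply: contraNT => /negbTE ->.
- case eP: (e \in route_arcs _); first by rewrite (Rp_Rm_arcs_disjoint _ eP) in e_arc.
  by rewrite sub0r oppr_eq0; apply: contraNT => /negbTE ->.
Qed.

Lemma norm_arc_sign_mul (R : realType) (l1 l2 : V * V) e k (y : R) :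
  `|arc_sign R Rp Rm l1 l2 e k * y| <= `|y|.
Proof.
rewrite normrM ler_piMl // /arc_sign.
by case: (_ \in _); case: (_ \in _); rewrite /= ?subrr ?subr0 ?sub0r ?normrN ?normr1 ?normr0.
Qed.

Section Equilibria.
Variables (R : realType) (a b : R) (od : R -> V * V) (c : R -> V * V -> R -> R).
Variables (s1 s2 : R -> seq V) (l1 l2 : V * V).
Let I : set R := `[a, b]%classic.
Hypothesis l1_neq_l2 : l1 != l2.
Hypothesis od_l12 : forall x, I x -> od x = l1 \/ od x = l2.
Hypothesis od_proper : forall x, I x -> (od x).1 != (od x).2.
Hypothesis od_meas : forall l, measurable (I `&` od @^-1` [set l]).
Hypothesis costs : admissible_costs I c.
Hypothesis eq1 : equilibrium adj I od c s1.
Hypothesis eq2 : equilibrium adj I od c s2.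

Let f1 := flow I s1.
Let f2 := flow I s2.
Local Notation D := (net_switch a b od s1 s2 Rp l1).
Local Notation sg := (arc_sign R Rp Rm l1 l2).

Lemma users_on_two_routes x : I x ->
  [/\ od x = l1 \/ od x = l2, s1 x = Rp (od x) \/ s1 x = Rm (od x)
    & s2 x = Rp (od x) \/ s2 x = Rm (od x)].
Proof.
move=> Ix; split; first exact: od_l12.
- by apply: route_cases; case: eq1 => _ [+ _]; apply.
- by apply: route_cases; case: eq2 => _ [+ _]; apply.
Qed.

Lemma flow_diff k e : f1 e - f2 e = sg e k * D k + sg e (~~ k) * D (~~ k).
Proof.
rewrite /f1 /f2 (flow_diffE od_meas (proj1 eq1) (proj1 eq2) users_on_two_routes).
by case: k; rewrite //= addrC.
Qed.

Lemma switched_routes_unchanged k u x : `|D (~~ k)| <= `|D k| ->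
  (if u then 1 else -1) * D k = `|D k| -> I x ->
  s1 x = Rsel Rp Rm u (lsel l1 l2 k) -> s2 x = Rsel Rp Rm (~~ u) (lsel l1 l2 k) ->
  {in route_arcs (Rsel Rp Rm u (lsel l1 l2 k)), f1 =1 f2} /\
  {in route_arcs (Rsel Rp Rm (~~ u) (lsel l1 l2 k)), f1 =1 f2}.
Proof.
move=> D_max uD Ix s1x s2x; set lk := lsel l1 l2 k in s1x s2x *.
have sgD'_le e : `|sg e (~~ k) * D (~~ k)| <= `|D k|.
  exact: le_trans (norm_arc_sign_mul _ _ _ _ _) D_max.
have f2_le_f1 : {in route_arcs (Rsel Rp Rm u lk), forall e, f2 e <= f1 e}.
  move=> e e_arc; rewrite -subr_ge0 (flow_diff k) (arc_sign_Rsel _ e_arc) uD.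
  by have := sgD'_le e; rewrite ler_norml; lra.
have f1_le_f2 : {in route_arcs (Rsel Rp Rm (~~ u) lk), forall e, f1 e <= f2 e}.
  move=> e e_arc; rewrite -subr_le0 (flow_diff k) (arc_sign_Rsel _ e_arc).
  have -> : (if ~~ u then 1 else -1) * D k = - `|D k| by rewrite -uD; case: (u) => /=; lra.
  by have := sgD'_le e; rewrite ler_norml; lra.
have best1 := proj2 (proj2 eq1) x _ Ix (proj1 (proj2 eq2) x Ix).
have best2 := proj2 (proj2 eq2) x _ Ix (proj1 (proj2 eq1) x Ix).
rewrite s1x s2x in best1 best2.
exact: route_costs_agree (fun e s t => (proj2 (proj1 costs x e Ix)).2 s t)
  (flow_ge0 _ _) (flow_ge0 _ _) best1 best2 f2_le_f1 f1_le_f2.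
Qed.

(* An unchanged arc of a route of pair [k] must have its [D k] cancelled by the other pair. *)
Lemma unchanged_route_arcs_shared k w : D k != 0 ->
  {in route_arcs (Rsel Rp Rm w (lsel l1 l2 k)), f1 =1 f2} ->
  {subset route_arcs (Rsel Rp Rm w (lsel l1 l2 k))
    <= route_arcs (Rsel Rp Rm w (lsel l1 l2 (~~ k)))}.
Proof.
move=> D_neq0 agree e e_arc; apply: (arc_sign_neq0_mem (R := R) e_arc); apply/eqP => sg0.
move: (flow_diff k e); rewrite agree // subrr sg0 mul0r addr0 (arc_sign_Rsel _ e_arc).
by move/esym/eqP; rewrite mulf_eq0 (negbTE D_neq0) orbF; case: (w); rewrite ?oppr_eq0 oner_eq0.
Qed.

Lemma net_switch_eq0_of_maximal k : `|D (~~ k)| <= `|D k| -> D k = 0.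
Proof.
move=> D_max; apply/eqP; apply: contraT => D_neq0.
have [u [uD [x Ix x_switch]]] := switching_user D_neq0.
have [odx s1x s2x] := user_classP users_on_two_routes Ix x_switch.
have [agree_u agree_nu] := switched_routes_unchanged D_max uD Ix s1x s2x.
have /eqP : lsel l1 l2 k = lsel l1 l2 (~~ k).
  apply: od_of_route_arcs; first by rewrite -odx od_proper.
  - refine (unchanged_route_arcs_shared (w := true) D_neq0 _).
    by case: (u) agree_u agree_nu.
  - refine (unchanged_route_arcs_shared (w := false) D_neq0 _).
    by case: (u) agree_u agree_nu.
by case: (k); rewrite /= ?(negbTE l1_neq_l2) // eq_sym (negbTE l1_neq_l2).
Qed.

Lemma net_switch_eq0 : D true = 0 /\ D false = 0.
Proof.
have maximal_eq0 k : `|D (~~ k)| <= `|D k| -> D k = 0 /\ D (~~ k) = 0.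
  move=> D_max; have Dk := net_switch_eq0_of_maximal D_max.
  by split=> //; move: D_max; rewrite Dk normr0 normr_le0 => /eqP.
by case/orP: (le_total `|D false| `|D true|) => [/(maximal_eq0 true)|/(maximal_eq0 false) []].
Qed.

Lemma equilibrium_flows_eq e : f1 e = f2 e.
Proof.
apply/eqP; rewrite -subr_eq0 (flow_diff true).
by have [-> ->] := net_switch_eq0; rewrite !mulr0 addr0.
Qed.

End Equilibria.

Theorem two_route_uniqueness (L : {set V * V}) (l1 l2 : V * V) :
  l1 != l2 -> {in L, forall l, l = l1 \/ l = l2} -> (forall l, l \in L -> l.1 != l.2) ->
  uniqueness_property adj L.
Proof.
move=> l1_neq_l2 L_l12 L_proper R a b od c I odL od_meas costs s1 s2 eq1 eq2 e.
apply: (equilibrium_flows_eq l1_neq_l2 _ _ od_meas costs eq1 eq2) => x Ix.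
- exact/L_l12/odL.
- exact/L_proper/odL.
Qed.

End TwoRouteNetworks.

Section CycleRoutes.
Variable n : nat.
Local Notation N := n.+3.
Local Notation Z := 'I_n.+3.

Lemma val_natr_small (m : nat) : (m < N)%N -> val (m%:R : Z) = m.
Proof. by move=> m_lt; rewrite Zp_nat /= modn_small. Qed.

Lemma val_add_val_opp (x : Z) : x != 0 -> (val x + val (- x) = N)%N.
Proof.
move=> x_neq0; have x_gt0 : (0 < x)%N by rewrite -val_eqE in x_neq0; rewrite lt0n.
have x_lt := ltn_ord x; rewrite /= modn_small; lia.
Qed.

Lemma cycle_adjE (i j : Z) : cycle_adj i j = (j == i + 1) || (j == i - 1).
Proof.
rewrite /cycle_adj; congr (_ || _); first by rewrite -val_eqE /= modnDmr addn1.
by rewrite [RHS]eq_sym subr_eq -val_eqE /= modnDmr addn1.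
Qed.

Lemma cycle_adj_step (s u y : Z) : s = 1 \/ s = -1 -> cycle_adj u y -> y = u + s \/ y = u - s.
Proof.
rewrite cycle_adjE => s_unit /orP[] /eqP ->; case: s_unit => ->; rewrite ?opprK; by [left|right].
Qed.

Definition cycle_walk (o s : Z) (m : nat) : seq Z := [seq o + i%:R * s | i <- iota 0 m.+1].

Definition cw_route (l : Z * Z) := cycle_walk l.1 1 (val (l.2 - l.1)).
Definition ccw_route (l : Z * Z) := cycle_walk l.1 (-1) (val (l.1 - l.2)).

Lemma cycle_walkS o s m : cycle_walk o s m.+1 = rcons (cycle_walk o s m) (o + m.+1%:R * s).
Proof. by rewrite /cycle_walk -[m.+2]addn1 iotaD map_cat /= cats1. Qed.

Lemma mem_cycle_walk o s m i : (i <= m)%N -> o + i%:R * s \in cycle_walk o s m.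
Proof. by move=> i_le; apply/mapP; exists i; rewrite ?mem_iota. Qed.

Lemma last_cycle_walk x o s m : last x (cycle_walk o s m) = o + m%:R * s.
Proof. by case: m => [|m]; rewrite ?cycle_walkS ?last_rcons. Qed.

Lemma size_cycle_walk_uniq o s m : uniq (cycle_walk o s m) -> (m < N)%N.
Proof.
move=> /uniq_leq_size/(_ (fun x _ => mem_enum 'I_N x)).
by rewrite size_map size_iota size_enum_ord.
Qed.

(* A duplicate-free path cannot turn back, so it continues the walk it started. *)
Lemma cycle_walk_extend o s q m : s = 1 \/ s = -1 -> (0 < m)%N ->
  uniq (cycle_walk o s m ++ q) -> path (@cycle_adj N) (o + m%:R * s) q ->
  cycle_walk o s m ++ q = cycle_walk o s (m + size q).
Proof.
move=> s_unit; elim: q m => [|y q IHq] m m_gt0 walk_uniq; first by rewrite cats0 addn0.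
case/andP=> /(cycle_adj_step s_unit)[y_next|y_back] q_path.
- have yE : y = o + m.+1%:R * s by rewrite y_next -natr1 mulrDl mul1r addrA.
  have -> : (m + size (y :: q) = m.+1 + size q)%N by rewrite /= addSnnS.
  rewrite -cat_rcons yE -cycle_walkS; apply: IHq => //; last by rewrite -yE.
  by rewrite cycle_walkS cat_rcons -yE.
- case: m m_gt0 walk_uniq y_back => // m _ walk_uniq y_back.
  have yE : y = o + m%:R * s by rewrite y_back -natr1 mulrDl mul1r addrA addrK.
  move: walk_uniq; rewrite cat_uniq => /and3P[_ /hasPn/(_ y)] + _.
  by rewrite inE eqxx yE mem_cycle_walk // => /(_ isT).
Qed.

Lemma cycle_route_cases (l : Z * Z) p :
  is_route (@cycle_adj N) l.1 l.2 p -> p = cw_route l \/ p = ccw_route l.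
Proof.
case: l => o d [[|y q] [-> [/= q_path [qd q_uniq]]]].
  move: qd => /= <-; left.
  by rewrite /cw_route -[(o, o).2 - _]/(o - o) subrr /cycle_walk /= mul0r addr0.
have [s s_unit yE] : exists2 s : Z, s = 1 \/ s = -1 & y = o + s.
  case/andP: q_path => /(cycle_adj_step (or_introl erefl))[->|->].
    by exists 1; [left|].
  by exists (-1); [right|].
have walk1 : o :: y :: q = cycle_walk o s 1 ++ q by rewrite /cycle_walk /= mul0r addr0 mul1r yE.
have walkE : o :: y :: q = cycle_walk o s (1 + size q).
  rewrite walk1; apply: cycle_walk_extend => //; first by rewrite -walk1.
  by rewrite mul1r -yE; case/andP: q_path.
rewrite walkE; set m := (1 + size q)%N in walkE *.
have m_lt : (m < N)%N by apply: (@size_cycle_walk_uniq o s); rewrite -walkE.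
have dE : d = o + m%:R * s by rewrite -qd -(last_cycle_walk o o s m) -walkE.
case: s_unit => s_val; subst s; [left|right]; congr cycle_walk; rewrite [(o, d).1]/= [(o, d).2]/=.
- by rewrite dE mulr1 (addrC o) addrK val_natr_small.
- by rewrite dE mulrN1 opprB addrC subrK val_natr_small.
Qed.

Lemma route_arcs_cycle_walk o s m : route_arcs (cycle_walk o s m) =
  [seq (o + i%:R * s, o + i.+1%:R * s) | i <- iota 0 m].
Proof. exact: (route_arcs_map_iota (fun i => o + i%:R * s)). Qed.

Lemma cycle_walk_arcsP o s m e :
  reflect (exists2 i, (i < m)%N & e = (o + i%:R * s, o + i.+1%:R * s))
          (e \in route_arcs (cycle_walk o s m)).
Proof.
rewrite route_arcs_cycle_walk; apply: (iffP mapP) => -[i].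
  by rewrite mem_iota => /andP[_ i_lt] ->; exists i.
by move=> i_lt ->; exists i; rewrite ?mem_iota.
Qed.

(* A clockwise arc is never counterclockwise, as 1 != -1 when N >= 3. *)
Lemma cw_ccw_arcs_disjoint l l' e :
  e \in route_arcs (cw_route l) -> e \in route_arcs (ccw_route l') = false.
Proof.
move=> /cycle_walk_arcsP[i _ ->]; apply/negP => /cycle_walk_arcsP[j _] /eqP.
rewrite xpair_eqE => /andP[/eqP tail /eqP head].
rewrite !mulr1 !mulrN1 in tail head.
move: head; rewrite -!natr1 addrA tail opprD addrA => /addrI/eqP.
by rewrite -addr_eq0 -val_eqE.
Qed.

Lemma mem_cycle_walk_arcs o s m i : (i < m)%N ->
  (o + i%:R * s, o + i.+1%:R * s) \in route_arcs (cycle_walk o s m).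
Proof. by move=> i_lt; apply/cycle_walk_arcsP; exists i. Qed.

Lemma val_cw_ccw (o d : Z) : o != d -> (val (d - o)%R + val (o - d)%R = N)%N.
Proof. by move=> o_neq_d; rewrite -(opprB d o) val_add_val_opp // subr_eq0 eq_sym. Qed.

Section ArcsDetermineEndpoints.
Variables o d o' d' : Z.
Hypothesis o_neq_d : o != d.
Hypothesis cw_sub : {subset route_arcs (cycle_walk o 1 (val (d - o)))
  <= route_arcs (cycle_walk o' 1 (val (d' - o')))}.
Hypothesis ccw_sub : {subset route_arcs (cycle_walk o (-1) (val (o - d)))
  <= route_arcs (cycle_walk o' (-1) (val (o' - d')))}.

Let cw_arc i : (i < val (d - o)%R)%N ->
  exists2 i', (i' < val (d' - o')%R)%N & o + i%:R = o' + i'%:R.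
Proof.
move=> /(mem_cycle_walk_arcs o 1)/cw_sub/cycle_walk_arcsP[i' i'_lt /eqP].
by rewrite xpair_eqE !mulr1 => /andP[/eqP src _]; exists i'.
Qed.

Let ccw_arc i : (i < val (o - d)%R)%N ->
  exists2 i', (i' < val (o' - d')%R)%N & o - i%:R = o' - i'%:R.
Proof.
move=> /(mem_cycle_walk_arcs o (-1))/ccw_sub/cycle_walk_arcsP[i' i'_lt /eqP].
by rewrite xpair_eqE !mulrN1 => /andP[/eqP src _]; exists i'.
Qed.

Let k_gt0 : (0 < val (d - o)%R)%N.
Proof. by have := val_cw_ccw o_neq_d; have : (val (o - d)%R < N)%N := ltn_ord _; lia. Qed.

Let j_gt0 : (0 < val (o - d)%R)%N.
Proof. by have := val_cw_ccw o_neq_d; have : (val (d - o)%R < N)%N := ltn_ord _; lia. Qed.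

Lemma cycle_walk_source_eq : o = o'.
Proof.
have [i1 i1_lt src1] := cw_arc k_gt0; have [i2 i2_lt src2] := ccw_arc j_gt0.
rewrite addr0 in src1; rewrite subr0 in src2.
have o'_neq_d' : o' != d' by apply: contraTneq i1_lt => <-; rewrite subrr.
have kj' := val_cw_ccw o'_neq_d'.
have : (i1 + i2)%:R = 0 :> Z.
  by apply: (@addrI _ o'); rewrite addr0 natrD addrA -src1 src2 subrK.
move/(congr1 val); rewrite val_natr_small => [i12_0|]; last by lia.
by rewrite src1 (_ : i1 = 0%N) ?addr0 //; move: i12_0 => /=; lia.
Qed.

Lemma cycle_walk_od_eq : (o, d) = (o', d').
Proof.
have oE := cycle_walk_source_eq.
have k_le : (val (d - o)%R <= val (d' - o)%R)%N.
  have [|i i_lt] := @cw_arc (val (d - o)).-1; first by rewrite prednK.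
  rewrite -oE in i_lt * => /addrI/(congr1 val).
  have k_lt : (val (d - o)%R < N)%N := ltn_ord _.
  have k'_lt : (val (d' - o)%R < N)%N := ltn_ord _.
  by rewrite !val_natr_small; lia.
have j_le : (val (o - d)%R <= val (o - d')%R)%N.
  have [|i i_lt] := @ccw_arc (val (o - d)).-1; first by rewrite prednK.
  rewrite -oE in i_lt * => /subrI/(congr1 val).
  have j_lt : (val (o - d)%R < N)%N := ltn_ord _.
  have j'_lt : (val (o - d')%R < N)%N := ltn_ord _.
  by rewrite !val_natr_small; lia.
have o_neq_d' : o != d' by apply: contraTneq (leq_trans k_gt0 k_le) => <-; rewrite subrr.
have := val_cw_ccw o_neq_d; have := val_cw_ccw o_neq_d' => kj' kj.
have /val_inj/addIr -> : val (d - o) = val (d' - o) by lia.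
by rewrite oE.
Qed.

End ArcsDetermineEndpoints.

Lemma cycle_od_eq (l l' : Z * Z) : l.1 != l.2 ->
  {subset route_arcs (cw_route l) <= route_arcs (cw_route l')} ->
  {subset route_arcs (ccw_route l) <= route_arcs (ccw_route l')} -> l = l'.
Proof. by case: l => o d; case: l' => o' d'; apply: cycle_walk_od_eq. Qed.

End CycleRoutes.

Lemma card_le2_cover (T : finType) (L : {set T}) (x0 y0 : T) : x0 != y0 -> (#|L| <= 2)%N ->
  exists l1 l2, l1 != l2 /\ {in L, forall l, l = l1 \/ l = l2}.
Proof.
move=> x0_neq_y0 L_le2; case: (ltnP 1 #|L|) => [L_gt1|/card_le1_eqP L_le1].
  have /cards2P[x [y [x_neq_y ->]]] : #|L| == 2%N by rewrite eqn_leq L_le2.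
  by exists x, y; split=> // l /set2P.
have [->|[z Lz]] := set_0Vmem L; first by exists x0, y0; split=> // l; rewrite inE.
exists z, (if z == x0 then y0 else x0); split=> [|l Ll]; last by left; apply: L_le1.
by case: (eqVneq z x0) => [->|]; rewrite ?eqxx.
Qed.

Theorem corollary1 (n : nat) (L : {set 'I_n * 'I_n}) :
  leq 3 n ->
  (forall l, l \in L -> l.1 != l.2) ->
  leq #|L| 2 ->
  uniqueness_property (@cycle_adj n) L.
Proof.
case: n L => [|[|[|n]]] L // _ L_proper L_le2.
have [l1 [l2 [l1_neq_l2 L_l12]]] := @card_le2_cover _ L (0, 0) (0, 1) isT L_le2.
apply: (two_route_uniqueness (@cycle_route_cases n) (@cw_ccw_arcs_disjoint n)
  (@cycle_od_eq n) l1_neq_l2).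
- exact: L_l12.
- exact: L_proper.
Qed.
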